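(* For any $\alpha\in[0,1/2)$, if a deterministic algorithm for the $\{0,1\}$-speed SSP problem is $(1+\alpha)$-consistent, then its robustness is at least $(4-2\alpha)/3$.
   Context: $\{0,1\}$-speed SSP: there are $n$ jobs with processing times $p_1,\dots,p_n\ge0$ and $m$ machines, each of speed $0$ (unavailable) or $1$ (available). In the partitioning stage the algorithm knows $\mathbf p$, $m$ and a prediction $\hat m$ of the number of available machines, and partitions the jobs into $m$ possibly empty bags. In the scheduling stage the actual number $m_0\ge1$ of available machines is revealed and each bag is assigned whole to one of the $m_0$ identical unit-speed machines; the makespan is the maximum total processing time on a machine. $opt(\mathbf p,x)$ is the minimum makespan of scheduling the individual jobs on $x$ identical unit-speed machines; $alg(\mathbf p,\hat m,m_0)$ is the algorithm's makespan. An algorithm is $c$-consistent if $alg(\mathbf p,m_0,m_0)\le c\cdot opt(\mathbf p,m_0)$ for all $\mathbf p,m_0$; its robustness is $\sup_{\mathbf p,\hat m,m_0} alg(\mathbf p,\hat m,m_0)/opt(\mathbf p,m_0)$. *)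

From HB Require Import structures.
From mathcomp Require Import all_boot all_order all_algebra.
From mathcomp Require Import reals.
Set Implicit Arguments. Unset Strict Implicit. Unset Printing Implicit Defensive.
Import Order.TTheory GRing.Theory Num.Theory.
Local Open Scope ring_scope.

(* To avoid empty index types, machine counts are written as successors:
   a count written [m.+1] means m+1 >= 1 machines. *)

Section SSP.
Variable R : realType.

Definition load n k (p : 'I_n -> R) (f : 'I_n -> 'I_k) (j : 'I_k) : R :=
  \sum_(i < n | f i == j) p i.

(* makespan of an assignment of jobs to k machines (loads are >= 0 when p >= 0) *)
Definition makespan n k (p : 'I_n -> R) (f : 'I_n -> 'I_k) : R :=
  \big[Order.max/0]_(j < k) load p f j.

(* The seed \sum_i p i is an upper bound on
   every makespan (for p >= 0), so it does not affect the minimum when k >= 1. *)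
Definition opt n k (p : 'I_n -> R) : R :=
  \big[Order.min/(\sum_(i < n) p i)]_(f : {ffun 'I_n -> 'I_k}) makespan p f.

(* A deterministic algorithm.
   - [part n m p mh] : the partitioning stage for n jobs with times p, m.+1 machines,
     prediction mh; it assigns each job to one of the m.+1 bags.
   - [sched n m p mh bags k] : the scheduling stage, after k.+1 available machines
     are revealed; it maps each bag (whole) to one of the k.+1 available machines.
     It may use everything known (p, m, mh and the bags). *)
Record algorithm := Algorithm {
  part : forall n m : nat, ('I_n -> R) -> nat -> 'I_n -> 'I_m.+1;
  sched : forall n m : nat, ('I_n -> R) -> nat -> ('I_n -> 'I_m.+1) ->
          forall k : nat, 'I_m.+1 -> 'I_k.+1
}.

(* alg(p, mh, m0) with m.+1 machines and m0 = k.+1 available machines *)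
Definition alg (A : algorithm) n m (p : 'I_n -> R) (mh : nat) (k : nat) : R :=
  let bags := part A m p mh in
  makespan p (fun i => sched A p mh bags k (bags i)).

Definition consistent (A : algorithm) (c : R) : Prop :=
  forall n m (p : 'I_n -> R), (forall i, 0 <= p i) ->
  forall k : nat, (k <= m)%N -> alg A m p k.+1 k <= c * opt k.+1 p.

(* robustness >= c, i.e. sup_{p, mh, m0} alg/opt >= c: every r < c is exceeded *)
Definition robustness_ge (A : algorithm) (c : R) : Prop :=
  forall r : R, r < c ->
  exists n m (p : 'I_n -> R) (mh k : nat),
    [/\ (forall i, 0 <= p i), (1 <= mh <= m.+1)%N, (k <= m)%N &
        r * opt k.+1 p < alg A m p mh k].

End SSP.

From mathcomp Require Import all_boot all_order all_algebra.
From mathcomp Require Import reals.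
From mathcomp Require Import lra.
Set Implicit Arguments. Unset Strict Implicit. Unset Printing Implicit Defensive.
Import Order.TTheory GRing.Theory Num.Theory.
Local Open Scope ring_scope.

(* Six unit jobs, three bags, prediction 3.  If three machines turn up,
   consistency caps every bag at (1 + alpha) * opt = (1 + alpha) * 2.  If only
   two turn up, one of them receives two of the three bags, hence load at
   least 6 - (2 + 2 alpha) = 4 - 2 alpha, while opt <= 3. *)

Section Makespan.
Variable R : realType.
Implicit Types (n k l : nat).

Lemma sum_le_load n k (p : 'I_n -> R) (f : 'I_n -> 'I_k) (t : 'I_k)
    (P : pred 'I_n) :
  (forall i, 0 <= p i) -> (forall i, P i -> f i = t) ->
  \sum_(i | P i) p i <= load p f t.
Proof.
move=> p_ge0 PfT; rewrite /load big_mkcond [leRHS]big_mkcond /=.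
apply: ler_sum => i _; case: ifP => [/PfT -> | _]; first by rewrite eqxx.
by case: ifP.
Qed.

Lemma load_le_makespan n k (p : 'I_n -> R) (f : 'I_n -> 'I_k) (t : 'I_k) :
  load p f t <= makespan p f.
Proof. exact: le_bigmax. Qed.

Lemma makespan_ge0 n k (p : 'I_n -> R) (f : 'I_n -> 'I_k) : 0 <= makespan p f.
Proof. exact: bigmax_ge_id. Qed.

Lemma makespan_le n k (p : 'I_n -> R) (f : 'I_n -> 'I_k) (c : R) :
  0 <= c -> (forall t, load p f t <= c) -> makespan p f <= c.
Proof. by move=> c_ge0 load_le; apply: bigmax_le. Qed.

Lemma opt_le_makespan n k (p : 'I_n -> R) (f : {ffun 'I_n -> 'I_k}) :
  opt k p <= makespan p f.
Proof. exact: bigmin_le. Qed.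

Lemma opt_ge0 n k (p : 'I_n -> R) : (forall i, 0 <= p i) -> 0 <= opt k p.
Proof.
move=> p_ge0; apply: le_bigmin => [|f _]; last exact: makespan_ge0.
exact: sumr_ge0.
Qed.

Lemma bag_le_makespan n k l (p : 'I_n -> R) (b : 'I_n -> 'I_k)
    (h : 'I_k -> 'I_l) (j : 'I_k) :
  (forall i, 0 <= p i) ->
  \sum_(i | b i == j) p i <= makespan p (fun i => h (b i)).
Proof.
move=> p_ge0; apply: le_trans _ (load_le_makespan _ _ (h j)).
by apply: sum_le_load => // i /eqP ->.
Qed.

Lemma makespan_ge_all_but_bag n k l (p : 'I_n -> R) (b : 'I_n -> 'I_k)
    (h : 'I_k -> 'I_l) (j0 : 'I_k) (t : 'I_l) :
  (forall i, 0 <= p i) -> (forall j, j != j0 -> h j = t) ->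
  \sum_i p i - \sum_(i | b i == j0) p i <= makespan p (fun i => h (b i)).
Proof.
move=> p_ge0 hj0; rewrite (bigID (fun i => b i == j0)) /= addrC addrK.
apply: le_trans _ (load_le_makespan _ _ t).
by apply: sum_le_load => // i /hj0.
Qed.

Definition unit_jobs n : 'I_n -> R := fun=> 1.
Arguments unit_jobs : clear implicits.

Lemma load_unit_jobs n k (f : 'I_n -> 'I_k) (t : 'I_k) :
  load (unit_jobs n) f t = #|[pred i | f i == t]|%:R.
Proof. by rewrite /load -sum1_card natr_sum. Qed.

(* Job [i] goes to machine [i %/ q.+1]; the jobs on one machine are told
   apart by their residue mod [q.+1], so there are at most [q.+1] of them. *)
Lemma opt_unit_jobs q m : opt m.+1 (unit_jobs (q.+1 * m.+1)) <= q.+1%:R.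
Proof.
pose f := [ffun i : 'I_(q.+1 * m.+1) => inord (i %/ q.+1) : 'I_m.+1].
apply: le_trans (opt_le_makespan _ f) _; apply: makespan_le => // t.
rewrite load_unit_jobs ler_nat -[X in (_ <= X)%N]card_ord.
pose res (i : 'I_(q.+1 * m.+1)) : 'I_q.+1 := inord (i %% q.+1).
have div_le (i : 'I_(q.+1 * m.+1)) : (i %/ q.+1 <= m)%N.
  by rewrite -ltnS ltn_divLR // [(m.+1 * _)%N]mulnC.
apply: (@leq_card_in _ _ res) => i j; rewrite !inE !ffunE => /eqP fi /eqP fj.
move=> /(congr1 val); rewrite /= !inordK ?ltn_mod // => eq_mod.
have eq_div : (i %/ q.+1 = j %/ q.+1)%N.
  by rewrite -[LHS](@inordK m) ?ltnS // -[RHS](@inordK m) ?ltnS // fi fj.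
by apply: val_inj; rewrite /= (divn_eq i q.+1) (divn_eq j q.+1) eq_div eq_mod.
Qed.

End Makespan.

Arguments unit_jobs {R} n.

Lemma consistent_bag_le (R : realType) (A : algorithm R) (c : R) n m
    (p : 'I_n -> R) k (j : 'I_m.+1) :
  consistent A c -> (forall i, 0 <= p i) -> (k <= m)%N ->
  \sum_(i | part A m p k.+1 i == j) p i <= c * opt k.+1 p.
Proof.
move=> Ac p_ge0 km; apply: le_trans _ (Ac _ _ _ p_ge0 _ km).
exact: bag_le_makespan.
Qed.

Lemma ord2_eq (x y z : 'I_2) : x != z -> y != z -> x = y.
Proof.
by case: x y z => [[|[|?]] ?] [[|[|?]] ?] [[|[|?]] ?] //= *; apply: val_inj.
Qed.

Lemma I3_to_I2_const_but_one (h : 'I_3 -> 'I_2) :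
  exists j0 t, forall j, j != j0 -> h j = t.
Proof.
have I3P (P : 'I_3 -> Prop) : P 0 -> P 1 -> P 2 -> forall j, P j.
  by move=> P0 P1 P2 [[|[|[|?]]] ?] //; [move: P0 | move: P1 | move: P2];
    congr P; apply: val_inj.
have [h01 | h01] := eqVneq (h 0) (h 1).
  by exists 2, (h 0); apply: I3P.
have [h02 | h02] := eqVneq (h 0) (h 2).
  by exists 1, (h 0); apply: I3P.
exists 0, (h 1); apply: I3P => // _.
by apply: (@ord2_eq _ _ (h 0)); rewrite eq_sym.
Qed.

Theorem theorem6 (R : realType) (alpha : R) (A : algorithm R) :
  0 <= alpha -> alpha < 1 / 2 ->
  consistent A (1 + alpha) ->
  robustness_ge A ((4 - 2 * alpha) / 3).
Proof.
move=> alpha_ge0 alpha_lt Acons r r_lt.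
pose p : 'I_6 -> R := unit_jobs 6.
have p_ge0 i : 0 <= p i by exact: ler01.
exists 6%N, 2%N, p, 3%N, 1%N; split => //.
pose b := part A 2 p 3.
have opt3 : opt 3 p <= 2 := opt_unit_jobs R 1 2.
have opt2 : opt 2 p <= 3 := opt_unit_jobs R 2 1.
have bag_le j : \sum_(i | b i == j) p i <= 2 + 2 * alpha.
  have := consistent_bag_le j Acons p_ge0 (leqnn 2).
  have : (1 + alpha) * opt 3 p <= (1 + alpha) * 2.
    by apply: ler_wpM2l => //; lra.
  lra.
have alg_ge : 4 - 2 * alpha <= alg A 2 p 3 1.
  have [j0 [t hj0]] := I3_to_I2_const_but_one (sched A p 3 b 1).
  apply: le_trans (makespan_ge_all_but_bag b p_ge0 hj0).
  rewrite sumr_const card_ord; have := bag_le j0; lra.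
have opt2_ge0 := opt_ge0 2 p_ge0.
have [r_ge0 | r_lt0] := lerP 0 r.
- have : r * opt 2 p <= r * 3 by exact: ler_wpM2l.
  lra.
- have : r * opt 2 p <= 0 by exact: mulr_le0_ge0 (ltW r_lt0) _.
  lra.
Qed.
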